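(* There exists a unique $k[[x]]$-algebra homomorphism $$\varphi: k[[y_0,y_1,y_2]]/(y_1^2-y_0y_2)\longrightarrow k[[x_0,x_1]]$$ which is grading preserving (i.e. $\varphi(y_p)$ is homogeneous of degree $p$ for $p=0,1,2$) and Poisson. It is given by $$y_0\mapsto x_0,\qquad y_1\mapsto -x_0x_1,\qquad y_2\mapsto x_0x_1^2.$$
   Context: $k$ is a field of characteristic zero. $A=k[[y_0,y_1,y_2]]/(y_1^2-y_0y_2)$ is the inverse limit $\varprojlim_n\mathcal P(\mathcal O_n)$ of the graded Poisson algebras of principal symbols of differential operators on $\mathcal O_n=k[x]/(x^{n+1})$; it is graded by $\deg y_p=p$ with Poisson bracket determined by $\{y_0,y_1\}=y_0$, $\{y_0,y_2\}=2y_1$, $\{y_1,y_2\}=y_2$. $B=k[[x_0,x_1]]$ is the completion at $(x_0,x_1)$ of the algebra $k[x_0,x_1]$ of principal symbols of differential operators on $k[x]$ ($x_0$ the symbol of $x$, $x_1$ the symbol of $\frac d{dx}$), graded by $\deg x_0=0$, $\deg x_1=1$ (degree in $x_1$), with Poisson bracket determined by $\{x_0,x_1\}=-1$. Both are $k[[x]]$-algebras via $x\mapsto y_0$ and $x\mapsto x_0$ respectively. ''Poisson'' means $\varphi$ preserves the brackets. *)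

(* Formal power series are represented by their coefficient
   functions; all operations are the usual (finite) formulas on coefficients. *)
From mathcomp Require Import all_boot all_order all_algebra.
Set Implicit Arguments. Unset Strict Implicit. Unset Printing Implicit Defensive.
Import Order.TTheory GRing.Theory Num.Theory.
Local Open Scope ring_scope.

Section PowerSeries.
Variable k : fieldType.

(* k[[x]] : coefficient of x^a *)
Definition PS1 := nat -> k.
(* k[[y0,y1,y2]] : coefficient of y0^a y1^b y2^c *)
Definition PS3 := nat -> nat -> nat -> k.
(* k[[x0,x1]] : coefficient of x0^a x1^b *)
Definition PS2 := nat -> nat -> k.

Definition add3 (f g : PS3) : PS3 := fun a b c => f a b c + g a b c.
Definition opp3 (f : PS3) : PS3 := fun a b c => - f a b c.
Definition zero3 : PS3 := fun _ _ _ => 0.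
Definition mono3 (i j l : nat) : PS3 :=
  fun a b c => if [&& a == i, b == j & c == l] then 1 else 0.
Definition one3 : PS3 := mono3 0 0 0.
Definition mul3 (f g : PS3) : PS3 := fun a b c =>
  \sum_(i < a.+1) \sum_(j < b.+1) \sum_(l < c.+1)
     f i j l * g (a - i)%N (b - j)%N (c - l)%N.
Definition y0 : PS3 := mono3 1 0 0.
Definition y1 : PS3 := mono3 0 1 0.
Definition y2 : PS3 := mono3 0 0 1.
Definition d3_0 (f : PS3) : PS3 := fun a b c => (a.+1)%:R * f a.+1 b c.
Definition d3_1 (f : PS3) : PS3 := fun a b c => (b.+1)%:R * f a b.+1 c.
Definition d3_2 (f : PS3) : PS3 := fun a b c => (c.+1)%:R * f a b c.+1.
Definition jac3 (D E : PS3 -> PS3) (f g : PS3) : PS3 :=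
  add3 (mul3 (D f) (E g)) (opp3 (mul3 (E f) (D g))).
(* Poisson bracket on k[[y0,y1,y2]] determined by
   {y0,y1} = y0, {y0,y2} = 2 y1, {y1,y2} = y2 (Leibniz rule in each argument):
   {f,g} = sum_{i<j} {y_i,y_j} (d_i f d_j g - d_j f d_i g). *)
Definition bracketA (f g : PS3) : PS3 :=
  add3 (mul3 y0 (jac3 d3_0 d3_1 f g))
  (add3 (mul3 (add3 y1 y1) (jac3 d3_0 d3_2 f g))
        (mul3 y2 (jac3 d3_1 d3_2 f g))).
Definition relA : PS3 := add3 (mul3 y1 y1) (opp3 (mul3 y0 y2)).
(* structure map k[[x]] -> A, x |-> y0 *)
Definition iotaA (h : PS1) : PS3 :=
  fun a b c => if (b == 0%N) && (c == 0%N) then h a else 0.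

Definition add2 (f g : PS2) : PS2 := fun a b => f a b + g a b.
Definition opp2 (f : PS2) : PS2 := fun a b => - f a b.
Definition mono2 (i j : nat) : PS2 :=
  fun a b => if (a == i) && (b == j) then 1 else 0.
Definition one2 : PS2 := mono2 0 0.
Definition mul2 (f g : PS2) : PS2 := fun a b =>
  \sum_(i < a.+1) \sum_(j < b.+1) f i j * g (a - i)%N (b - j)%N.
Definition x0 : PS2 := mono2 1 0.
Definition x1 : PS2 := mono2 0 1.
Definition d2_0 (f : PS2) : PS2 := fun a b => (a.+1)%:R * f a.+1 b.
Definition d2_1 (f : PS2) : PS2 := fun a b => (b.+1)%:R * f a b.+1.
(* Poisson bracket on k[[x0,x1]] determined by {x0,x1} = -1:
   {f,g} = - (d_0 f d_1 g - d_1 f d_0 g). *)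
Definition bracketB (f g : PS2) : PS2 :=
  opp2 (add2 (mul2 (d2_0 f) (d2_1 g)) (opp2 (mul2 (d2_1 f) (d2_0 g)))).
(* structure map k[[x]] -> B, x |-> x0 *)
Definition iotaB (h : PS1) : PS2 := fun a b => if b == 0%N then h a else 0.
(* homogeneous of degree p for the grading deg x0 = 0, deg x1 = 1 *)
Definition homogB (p : nat) (f : PS2) : Prop :=
  forall a b : nat, b != p -> f a b = 0.

(* A k[[x]]-algebra homomorphism A = k[[y0,y1,y2]]/(y1^2 - y0 y2) -> B,
   represented (universal property of the quotient) by a k[[x]]-algebra
   homomorphism phi : k[[y0,y1,y2]] -> B that kills y1^2 - y0 y2. *)
Definition kx_alg_hom_A_B (phi : PS3 -> PS2) : Prop :=
  [/\ forall f g, phi (add3 f g) = add2 (phi f) (phi g),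
      forall f g, phi (mul3 f g) = mul2 (phi f) (phi g),
      phi one3 = one2,
      forall h, phi (iotaA h) = iotaB h
    & phi relA = (fun _ _ => 0)].

Definition grading_preserving (phi : PS3 -> PS2) : Prop :=
  [/\ homogB 0 (phi y0), homogB 1 (phi y1) & homogB 2 (phi y2)].

Definition poisson_hom (phi : PS3 -> PS2) : Prop :=
  forall f g, phi (bracketA f g) = bracketB (phi f) (phi g).

(* two such maps are equal as maps on A iff they agree on all of k[[y]] *)
Definition good_phi (phi : PS3 -> PS2) : Prop :=
  [/\ kx_alg_hom_A_B phi, grading_preserving phi & poisson_hom phi].

End PowerSeries.

(* Work inside the polynomial rings R[y0,y1,y2] and R[x0,x1], with the evaluation
   map Phi : y0 |-> x0, y1 |-> -x0 x1, y2 |-> x0 x1^2. It kills y1^2 - y0 y2, and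
   the chain rule E (Phi P) = sum_i Phi (d_i P) * E (Phi y_i), valid for every
   derivation E of R[x0,x1], reduces the compatibility with the brackets to a
   polynomial identity between the images of the generators. Every Phi y_i is
   divisible by x0, so the x0^a-part of Phi P only depends on the coefficients of P
   of degree at most a in each variable: Phi extends to power series by truncation.
   Conversely, a grading-preserving Poisson k[[x]]-algebra map psi sends y0 = x to
   x0, and {x0, u} = - du/dx1; the relations {y0,y1} = y0 and {y0,y2} = 2 y1 together
   with homogeneity then force psi y1 and psi y2 (dividing by 2 uses characteristic
   0). Hence psi agrees with Phi on polynomials, and on a series f modulo x0^(a+1)
   because f minus its truncation lies in the ideal (y0^(a+1), y1^(a+1), y2^(a+1)). *)

From mathcomp Require Import all_boot all_order all_algebra.
From mathcomp Require Import ring zify.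
From Stdlib Require Import FunctionalExtensionality.
Set Implicit Arguments. Unset Strict Implicit. Unset Printing Implicit Defensive.
Import GRing.Theory.
Local Open Scope ring_scope.

Definition is_derivation (A : nzRingType) (d : A -> A) :=
  {morph d : x y / x + y} /\ forall x y, d (x * y) = d x * y + x * d y.

Lemma coefXnC (A : nzRingType) (q : A) i a :
  ('X^i * q%:P)`_a = if a == i then q else 0.
Proof. by rewrite coefMC coefXn; case: eqP; rewrite ?mul1r ?mul0r. Qed.

Section Derivations.
Variable A : nzRingType.
Implicit Types (d : A -> A) (p : {poly A}).

Lemma derivation0 d : is_derivation d -> d 0 = 0.
Proof. by case=> dD _; apply: (addrI (d 0)); rewrite -dD !addr0. Qed.

Lemma derivationN d x : is_derivation d -> d (- x) = - d x.
Proof.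
move=> hd; apply: (addrI (d x)); case: (hd) => dD _.
by rewrite -dD !subrr (derivation0 hd).
Qed.

Lemma deriv_is_derivation : is_derivation (@deriv A).
Proof. by split=> p q; [rewrite derivD | rewrite derivM]. Qed.

Lemma map_poly_is_derivation d : is_derivation d -> is_derivation (map_poly d).
Proof.
move=> hd; have d0 := derivation0 hd; case: hd => dD dM.
split=> p q; apply/polyP => i; first by rewrite coefD !coef_map_id0 // coefD dD.
rewrite coef_map_id0 // coefD !coefM (big_morph d dD d0) -big_split /=.
by apply: eq_bigr => j _; rewrite dM !coef_map_id0.
Qed.

Lemma map_poly_derivationC d c : d 0 = 0 -> map_poly d c%:P = (d c)%:P.
Proof. by move=> d0; apply/polyP=> i; rewrite coef_map_id0 // !coefC; case: eqP. Qed.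

Lemma map_poly_derivationX d : d 0 = 0 -> d 1 = 0 -> map_poly d 'X = 0.
Proof. by move=> d0 d1; apply/polyP=> i; rewrite coef_map_id0 // coefX coef0; case: eqP. Qed.

End Derivations.

Section PolynomialModel.
Variable R : comNzRingType.
Local Notation P2 := {poly {poly R}}.
Local Notation P3 := {poly {poly {poly R}}}.

(* [P3] is R[y2][y1][y0], with [Y0] the outermost variable, so that [P`_a`_b`_c]
   is the coefficient of y0^a y1^b y2^c; likewise [P2] is R[x1][x0]. *)
Definition Y0 : P3 := 'X.
Definition Y1 : P3 := 'X%:P.
Definition Y2 : P3 := 'X%:P%:P.
Definition X0 : P2 := 'X.
Definition X1 : P2 := 'X%:P.
Definition imY1 : P2 := - (X0 * X1).
Definition imY2 : P2 := X0 * (X1 * X1).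

Definition polyCC : {rmorphism R -> P2} := polyC \o polyC.
Fact imY2_comm : commr_rmorph polyCC imY2. Proof. by move=> x; apply: mulrC. Qed.
Definition eval_Y2 : {rmorphism {poly R} -> P2} := horner_morph imY2_comm.
Fact imY1_comm : commr_rmorph eval_Y2 imY1. Proof. by move=> x; apply: mulrC. Qed.
Definition eval_Y1 : {rmorphism {poly {poly R}} -> P2} := horner_morph imY1_comm.
Fact X0_comm : commr_rmorph eval_Y1 X0. Proof. by move=> x; apply: mulrC. Qed.
Definition Phi : {rmorphism P3 -> P2} := horner_morph X0_comm.

Lemma Phi_Y0 : Phi Y0 = X0. Proof. exact: horner_morphX. Qed.
Lemma Phi_Y1 : Phi Y1 = imY1.
Proof. by rewrite [LHS]horner_morphC [LHS]horner_morphX. Qed.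
Lemma Phi_Y2 : Phi Y2 = imY2.
Proof. by rewrite [LHS]horner_morphC [LHS]horner_morphC [LHS]horner_morphX. Qed.
Lemma Phi_polyCC (p : {poly R}) : Phi (map_poly polyCC p) = map_poly polyC p.
Proof.
elim/poly_ind: p => [|p c IHp]; first by rewrite !raddf0.
rewrite !(rmorphD, rmorphM) /= !map_polyX !map_polyC IHp.
by rewrite [Phi _]horner_morphX horner_morphC /= horner_morphC /= horner_morphC.
Qed.

Lemma Phi_C (c : R) : Phi c%:P%:P%:P = c%:P%:P.
Proof. by have := Phi_polyCC c%:P; rewrite !map_polyC. Qed.

Lemma poly3_ind (K : P3 -> Prop) :
  (forall c, K c%:P%:P%:P) -> (forall P Q, K P -> K Q -> K (P + Q)) ->
  (forall P Q, K P -> K Q -> K (P * Q)) -> K Y0 -> K Y1 -> K Y2 -> forall P, K P.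
Proof.
move=> KC KD KM K0 K1 K2.
have KP2 (r : {poly R}) : K r%:P%:P.
  elim/poly_ind: r => [|r c IHr]; first by have := KC 0; rewrite !polyC0.
  by rewrite !(rmorphD, rmorphM); apply: KD; [apply: KM | apply: KC].
have KP1 (q : {poly {poly R}}) : K q%:P.
  elim/poly_ind: q => [|q r IHq]; first by have := KP2 0; rewrite !polyC0.
  by rewrite !(rmorphD, rmorphM); apply: KD; [apply: KM | apply: KP2].
elim/poly_ind => [|P q IHP]; first by have := KP1 0; rewrite polyC0.
by apply: KD; [apply: KM | apply: KP1].
Qed.

Definition dY0 : P3 -> P3 := @deriv _.
Definition dY1 : P3 -> P3 := map_poly (@deriv _).
Definition dY2 : P3 -> P3 := map_poly (map_poly (@deriv _)).
Definition dX0 : P2 -> P2 := @deriv _.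
Definition dX1 : P2 -> P2 := map_poly (@deriv _).

Lemma dY0_derivation : is_derivation dY0. Proof. exact: deriv_is_derivation. Qed.
Lemma dY1_derivation : is_derivation dY1.
Proof. exact/map_poly_is_derivation/deriv_is_derivation. Qed.
Lemma dY2_derivation : is_derivation dY2.
Proof. exact/map_poly_is_derivation/map_poly_is_derivation/deriv_is_derivation. Qed.
Lemma dX0_derivation : is_derivation dX0. Proof. exact: deriv_is_derivation. Qed.
Lemma dX1_derivation : is_derivation dX1.
Proof. exact/map_poly_is_derivation/deriv_is_derivation. Qed.

Lemma dY_C c : [/\ dY0 c%:P%:P%:P = 0, dY1 c%:P%:P%:P = 0 & dY2 c%:P%:P%:P = 0].
Proof.
rewrite /dY0 /dY1 /dY2 (map_poly_derivationC _ (map_poly0 _)).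
by rewrite !(map_poly_derivationC _ (deriv0 _)) !derivC !polyC0.
Qed.

Lemma dY0_Y : [/\ dY0 Y0 = 1, dY0 Y1 = 0 & dY0 Y2 = 0].
Proof. by rewrite /dY0 derivX !derivC. Qed.

Lemma dY1_Y : [/\ dY1 Y0 = 0, dY1 Y1 = 1 & dY1 Y2 = 0].
Proof.
rewrite /dY1 (map_poly_derivationX (deriv0 _) (derivC _)).
by rewrite !(map_poly_derivationC _ (deriv0 _)) derivX derivC.
Qed.

Lemma dY2_Y : [/\ dY2 Y0 = 0, dY2 Y1 = 0 & dY2 Y2 = 1].
Proof.
have dX : map_poly (@deriv R) 'X = 0 := map_poly_derivationX (deriv0 _) (derivC _).
have dC1 : map_poly (@deriv R) 1 = 0.
  by rewrite -polyC1 (map_poly_derivationC _ (deriv0 _)) derivC.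
rewrite /dY2 (map_poly_derivationX (map_poly0 _) dC1) /Y1 /Y2.
rewrite !(map_poly_derivationC _ (map_poly0 _)) dX polyC0.
by rewrite (map_poly_derivationC _ (deriv0 _)) derivX !polyC1.
Qed.

Lemma dX_C c : dX0 c%:P%:P = 0 /\ dX1 c%:P%:P = 0.
Proof. by rewrite /dX0 /dX1 derivC (map_poly_derivationC _ (deriv0 _)) derivC. Qed.

Lemma dX_X : [/\ dX0 X0 = 1, dX0 X1 = 0, dX1 X0 = 0 & dX1 X1 = 1].
Proof.
rewrite /dX0 /dX1 derivX derivC (map_poly_derivationX (deriv0 _) (derivC _)).
by rewrite (map_poly_derivationC _ (deriv0 _)) derivX.
Qed.

Lemma dX_imY : [/\ dX0 imY1 = - X1, dX0 imY2 = X1 * X1,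
                   dX1 imY1 = - X0 & dX1 imY2 = X0 * (X1 + X1)].
Proof.
have [[_ M0] [_ M1]] := (dX0_derivation, dX1_derivation).
rewrite /imY1 /imY2 (derivationN _ dX0_derivation) (derivationN _ dX1_derivation).
case: dX_X => e00 e01 e10 e11; rewrite !(M0, M1) e00 e01 e10 e11.
by split; ring.
Qed.

Definition vanish_below n (F : P2) := forall m, (m < n)%N -> F`_m = 0.

Lemma vanish_below_mulr n F G : vanish_below n F -> vanish_below n (F * G).
Proof.
move=> hF m hm; rewrite coefM big1 // => i _.
by rewrite hF ?mul0r // (leq_ltn_trans _ hm) // -ltnS.
Qed.

Lemma vanish_below_X0n n G : vanish_below n (X0 ^+ n * G).
Proof. by move=> m hm; rewrite coefXnM hm. Qed.

Lemma vanish_below_horner (A : nzRingType) (f : {rmorphism A -> P2}) (v : P2)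
    (p : {poly A}) a :
  (forall i, (i <= a)%N -> vanish_below a.+1 (f p`_i)) ->
  vanish_below a.+1 ((map_poly f p).[X0 * v]).
Proof.
move=> hp m hm; rewrite horner_coef coef_sum big1 // => i _; rewrite coef_map.
have [hi | hi] := leqP i a; first exact: vanish_below_mulr (hp i hi) _ hm.
by rewrite mulrC exprMn -mulrA; apply: vanish_below_X0n; apply: leq_trans hm hi.
Qed.

Lemma vanish_below_Phi a (P : P3) :
  (forall i j l, (i <= a)%N -> (j <= a)%N -> (l <= a)%N -> P`_i`_j`_l = 0) ->
  vanish_below a.+1 (Phi P).
Proof.
move=> hP.
have -> : Phi P = (map_poly eval_Y1 P).[X0 * 1] by rewrite mulr1.
apply: vanish_below_horner => i hi.
have -> : eval_Y1 P`_i = (map_poly eval_Y2 P`_i).[X0 * - X1] by rewrite mulrN.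
apply: vanish_below_horner => j hj.
have -> : eval_Y2 P`_i`_j = (map_poly polyCC P`_i`_j).[X0 * (X1 * X1)] by [].
apply: vanish_below_horner => l hl.
by rewrite hP // rmorph0 => m _; rewrite coef0.
Qed.

Lemma Phi_coef_local a (P Q : P3) :
  (forall i j l, (i <= a)%N -> (j <= a)%N -> (l <= a)%N -> P`_i`_j`_l = Q`_i`_j`_l) ->
  forall m, (m <= a)%N -> (Phi P)`_m = (Phi Q)`_m.
Proof.
move=> hPQ m hm; apply/eqP; rewrite -subr_eq0 -coefB -rmorphB; apply/eqP.
by apply: (vanish_below_Phi (a := a)) => // i j l hi hj hl; rewrite !coefB hPQ ?subrr.
Qed.

Lemma vanish_below_Phi_Yn n : [/\ vanish_below n (Phi (Y0 ^+ n)),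
  vanish_below n (Phi (Y1 ^+ n)) & vanish_below n (Phi (Y2 ^+ n))].
Proof.
rewrite !rmorphXn Phi_Y0 Phi_Y1 Phi_Y2 /imY1 /imY2 -mulrN !exprMn.
by split; [rewrite -[X0 ^+ n]mulr1 |  | ]; apply: vanish_below_X0n.
Qed.

Lemma imY1E : imY1 = - (X0 * X1). Proof. by []. Qed.
Lemma imY2E : imY2 = X0 * (X1 * X1). Proof. by []. Qed.

Lemma Y_monomialE i j l :
  Y0 ^+ i * (Y1 ^+ j * Y2 ^+ l) = 'X^i * ('X^j * ('X^l)%:P)%:P.
Proof. by rewrite /Y1 /Y2 -!rmorphXn -rmorphM. Qed.
Lemma X_monomialE i j : X0 ^+ i * X1 ^+ j = 'X^i * ('X^j)%:P.
Proof. by rewrite /X1 -rmorphXn. Qed.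

Lemma coef_dY P a b c : [/\ (dY0 P)`_a`_b`_c = a.+1%:R * P`_a.+1`_b`_c,
  (dY1 P)`_a`_b`_c = b.+1%:R * P`_a`_b.+1`_c & (dY2 P)`_a`_b`_c = c.+1%:R * P`_a`_b`_c.+1].
Proof.
split; rewrite /dY0 /dY1 /dY2.
- by rewrite coef_deriv !coefMn mulr_natl.
- by rewrite (coef_map_id0 _ _ (deriv0 _)) coef_deriv coefMn mulr_natl.
- rewrite (coef_map_id0 _ _ (map_poly0 _)) (coef_map_id0 _ _ (deriv0 _)).
  by rewrite coef_deriv mulr_natl.
Qed.
Lemma coef_dX F a b :
  (dX0 F)`_a`_b = a.+1%:R * F`_a.+1`_b /\ (dX1 F)`_a`_b = b.+1%:R * F`_a`_b.+1.
Proof.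
split; rewrite /dX0 /dX1; first by rewrite coef_deriv coefMn mulr_natl.
by rewrite (coef_map_id0 _ _ (deriv0 _)) coef_deriv mulr_natl.
Qed.

End PolynomialModel.

(* Unifying two distinct polynomial constants otherwise unfolds them down to
   their coefficient lists, which is prohibitively slow. *)
Opaque Y0 Y1 Y2 X0 X1 imY1 imY2 dY0 dY1 dY2 dX0 dX1.

Section PoissonModel.
Variable R : comNzRingType.
Local Notation P2 := {poly {poly R}}.
Local Notation P3 := {poly {poly {poly R}}}.
Local Notation Y0 := (Y0 R).
Local Notation Y1 := (Y1 R).
Local Notation Y2 := (Y2 R).
Local Notation X0 := (X0 R).
Local Notation X1 := (X1 R).
Local Notation imY1 := (imY1 R).
Local Notation imY2 := (imY2 R).
Local Notation Phi := (Phi R).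
Local Notation dY0 := (@dY0 R).
Local Notation dY1 := (@dY1 R).
Local Notation dY2 := (@dY2 R).
Local Notation dX0 := (@dX0 R).
Local Notation dX1 := (@dX1 R).

Lemma Phi_dY_C c : [/\ Phi (dY0 c%:P%:P%:P) = 0, Phi (dY1 c%:P%:P%:P) = 0
                    & Phi (dY2 c%:P%:P%:P) = 0].
Proof. by case: (dY_C c) => -> -> ->; split; apply: rmorph0. Qed.

Lemma Phi_dY_Y0 : [/\ Phi (dY0 Y0) = 1, Phi (dY1 Y0) = 0 & Phi (dY2 Y0) = 0].
Proof.
case: (dY0_Y R) (dY1_Y R) (dY2_Y R) => [-> _ _] [-> _ _] [-> _ _].
by split; [apply: rmorph1 | apply: rmorph0 | apply: rmorph0].
Qed.

Lemma Phi_dY_Y1 : [/\ Phi (dY0 Y1) = 0, Phi (dY1 Y1) = 1 & Phi (dY2 Y1) = 0].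
Proof.
case: (dY0_Y R) (dY1_Y R) (dY2_Y R) => [_ -> _] [_ -> _] [_ -> _].
by split; [apply: rmorph0 | apply: rmorph1 | apply: rmorph0].
Qed.

Lemma Phi_dY_Y2 : [/\ Phi (dY0 Y2) = 0, Phi (dY1 Y2) = 0 & Phi (dY2 Y2) = 1].
Proof.
case: (dY0_Y R) (dY1_Y R) (dY2_Y R) => [_ _ ->] [_ _ ->] [_ _ ->].
by split; [apply: rmorph0 | apply: rmorph0 | apply: rmorph1].
Qed.

Definition bracketP3 (P Q : P3) : P3 :=
  Y0 * (dY0 P * dY1 Q - dY1 P * dY0 Q)
  + ((Y1 + Y1) * (dY0 P * dY2 Q - dY2 P * dY0 Q)
  + Y2 * (dY1 P * dY2 Q - dY2 P * dY1 Q)).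
Definition bracketP2 (F G : P2) : P2 := - (dX0 F * dX1 G - dX1 F * dX0 G).

Lemma derivation_Phi (E : P2 -> P2) : is_derivation E -> (forall c, E c%:P%:P = 0) ->
  forall P, E (Phi P) =
    Phi (dY0 P) * E X0 + Phi (dY1 P) * E imY1 + Phi (dY2 P) * E imY2.
Proof.
move=> [ED EM] EC.
have [D0D D0M] := dY0_derivation R; have [D1D D1M] := dY1_derivation R.
have [D2D D2M] := dY2_derivation R.
elim/poly3_ind => [c|P Q eP eQ|P Q eP eQ|||].
- by case: (Phi_dY_C c) => -> -> ->; rewrite (Phi_C c) (EC c); ring.
- by rewrite rmorphD ED D0D D1D D2D !rmorphD eP eQ; ring.
- by rewrite rmorphM EM D0M D1M D2M !rmorphD !rmorphM eP eQ; ring.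
- by case: Phi_dY_Y0 => -> -> ->; rewrite Phi_Y0; ring.
- by case: Phi_dY_Y1 => -> -> ->; rewrite Phi_Y1; ring.
- by case: Phi_dY_Y2 => -> -> ->; rewrite Phi_Y2; ring.
Qed.

Lemma bracketP3_Y0 : bracketP3 Y0 Y1 = Y0 /\ bracketP3 Y0 Y2 = Y1 + Y1.
Proof.
rewrite /bracketP3; case: (dY0_Y R) (dY1_Y R) (dY2_Y R) => [-> -> ->] [-> -> ->] [-> -> ->].
by split; ring.
Qed.

Lemma Phi_bracket P Q : Phi (bracketP3 P Q) = bracketP2 (Phi P) (Phi Q).
Proof.
have C0 c : dX0 c%:P%:P = 0 by case: (dX_C c).
have C1 c : dX1 c%:P%:P = 0 by case: (dX_C c).
rewrite /bracketP3 /bracketP2 !(rmorphD, rmorphB, rmorphM) Phi_Y0 Phi_Y1 Phi_Y2.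
rewrite !(derivation_Phi (dX0_derivation R) C0) !(derivation_Phi (dX1_derivation R) C1).
case: (dX_X R) (dX_imY R) => e00 _ e10 _ [-> -> -> ->]; rewrite e00 e10 imY1E imY2E; ring.
Qed.

End PoissonModel.

Section Series.
Variable k : fieldType.
Local Notation P2 := {poly {poly k}}.
Local Notation P3 := {poly {poly {poly k}}}.
Local Notation Y0 := (Y0 k).
Local Notation Y1 := (Y1 k).
Local Notation Y2 := (Y2 k).
Local Notation X0 := (X0 k).
Local Notation X1 := (X1 k).
Local Notation imY1 := (imY1 k).
Local Notation imY2 := (imY2 k).
Local Notation Phi := (Phi k).
Local Notation dY0 := (@dY0 k).
Local Notation dY1 := (@dY1 k).
Local Notation dY2 := (@dY2 k).
Local Notation dX0 := (@dX0 k).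
Local Notation dX1 := (@dX1 k).

Definition ps3 (P : P3) : PS3 k := fun a b c => P`_a`_b`_c.
Definition ps2 (F : P2) : PS2 k := fun a b => F`_a`_b.

Lemma ps3_ext (f g : PS3 k) : (forall a b c, f a b c = g a b c) -> f = g.
Proof. by move=> fg; do 3 apply: functional_extensionality => ?; apply: fg. Qed.
Lemma ps2_ext (f g : PS2 k) : (forall a b, f a b = g a b) -> f = g.
Proof. by move=> fg; do 2 apply: functional_extensionality => ?; apply: fg. Qed.

Lemma ps3D P Q : ps3 (P + Q) = add3 (ps3 P) (ps3 Q).
Proof. by apply: ps3_ext => a b c; rewrite /ps3 !coefD. Qed.
Lemma ps3N P : ps3 (- P) = opp3 (ps3 P).
Proof. by apply: ps3_ext => a b c; rewrite /ps3 !coefN. Qed.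
Lemma ps3M P Q : ps3 (P * Q) = mul3 (ps3 P) (ps3 Q).
Proof.
apply: ps3_ext => a b c; rewrite /ps3 coefM !coef_sum; apply: eq_bigr => i _.
by rewrite coefM coef_sum; apply: eq_bigr => j _; rewrite coefM.
Qed.
Lemma ps2D F G : ps2 (F + G) = add2 (ps2 F) (ps2 G).
Proof. by apply: ps2_ext => a b; rewrite /ps2 !coefD. Qed.
Lemma ps2N F : ps2 (- F) = opp2 (ps2 F).
Proof. by apply: ps2_ext => a b; rewrite /ps2 !coefN. Qed.
Lemma ps2M F G : ps2 (F * G) = mul2 (ps2 F) (ps2 G).
Proof.
by apply: ps2_ext => a b; rewrite /ps2 coefM coef_sum; apply: eq_bigr => i _; rewrite coefM.
Qed.

Lemma ps3_dY P :
  [/\ ps3 (dY0 P) = d3_0 (ps3 P), ps3 (dY1 P) = d3_1 (ps3 P) & ps3 (dY2 P) = d3_2 (ps3 P)].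
Proof. by split; apply: ps3_ext => a b c; case: (coef_dY P a b c). Qed.
Lemma ps2_dX F : ps2 (dX0 F) = d2_0 (ps2 F) /\ ps2 (dX1 F) = d2_1 (ps2 F).
Proof. by split; apply: ps2_ext => a b; case: (coef_dX F a b). Qed.

Lemma ps3_monomial i j l : ps3 (Y0 ^+ i * (Y1 ^+ j * Y2 ^+ l)) = mono3 k i j l.
Proof.
apply: ps3_ext => a b c; rewrite /ps3 Y_monomialE /mono3 coefXnC.
case: (a == i); last by rewrite !coef0.
rewrite coefXnC; case: (b == j); last by rewrite coef0.
by rewrite coefXn; case: (c == l).
Qed.
Lemma ps2_monomial i j : ps2 (X0 ^+ i * X1 ^+ j) = mono2 k i j.
Proof.
apply: ps2_ext => a b; rewrite /ps2 X_monomialE /mono2 coefXnC.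
by case: (a == i); rewrite ?coef0 // coefXn; case: (b == j).
Qed.

Lemma ps3_Yn n : [/\ ps3 (Y0 ^+ n) = mono3 k n 0 0, ps3 (Y1 ^+ n) = mono3 k 0 n 0
                  & ps3 (Y2 ^+ n) = mono3 k 0 0 n].
Proof.
by split; rewrite -ps3_monomial !expr0 ?mulr1 ?mul1r.
Qed.
Lemma ps3_Y : [/\ ps3 Y0 = y0 k, ps3 Y1 = y1 k & ps3 Y2 = y2 k].
Proof. by case: (ps3_Yn 1); rewrite !expr1. Qed.
Lemma ps3_1 : ps3 1 = one3 k.
Proof. by case: (ps3_Yn 0); rewrite expr0. Qed.

Lemma mono2E i j a b : mono2 k i j a b = ((a == i) && (b == j))%:R.
Proof. by rewrite /mono2; case: (_ && _). Qed.

Lemma ps2_X0 a b : ps2 X0 a b = ((a == 1) && (b == 0))%:R.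
Proof. by have := ps2_monomial 1 0; rewrite expr0 expr1 mulr1 => ->; rewrite mono2E. Qed.
Lemma ps2_imY1 a b : ps2 imY1 a b = - ((a == 1) && (b == 1))%:R.
Proof.
have := ps2_monomial 1 1; rewrite !expr1 => e.
by rewrite imY1E ps2N e /opp2 mono2E.
Qed.
Lemma ps2_imY2 a b : ps2 imY2 a b = ((a == 1) && (b == 2))%:R.
Proof. by have := ps2_monomial 1 2; rewrite expr1 expr2 => e; rewrite imY2E e mono2E. Qed.

Lemma ps2_X : ps2 X0 = x0 k /\ ps2 X1 = x1 k.
Proof.
have := ps2_monomial 1 0; have := ps2_monomial 0 1.
by rewrite !expr0 !expr1 mulr1 mul1r.
Qed.
Lemma ps2_imY : ps2 imY1 = opp2 (mul2 (x0 k) (x1 k)) /\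
                ps2 imY2 = mul2 (x0 k) (mul2 (x1 k) (x1 k)).
Proof. by case: ps2_X => <- <-; rewrite imY1E imY2E ps2N !ps2M. Qed.

Lemma ps2_1 : ps2 1 = one2 k.
Proof. by have := ps2_monomial 0 0; rewrite !expr0 mulr1. Qed.

Lemma ps3_polyCC (p : {poly k}) : ps3 (map_poly (polyCC k) p) = iotaA (fun i => p`_i).
Proof.
apply: ps3_ext => a b c; rewrite /ps3 /iotaA coef_map /= coefC.
by case: (b == 0); rewrite ?coef0 // coefC; case: (c == 0).
Qed.
Lemma ps2_polyC (p : {poly k}) : ps2 (map_poly polyC p) = iotaB (fun i => p`_i).
Proof. by apply: ps2_ext => a b; rewrite /ps2 /iotaB coef_map /= coefC. Qed.

Lemma ps3_bracket P Q : ps3 (bracketP3 P Q) = bracketA (ps3 P) (ps3 Q).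
Proof.
rewrite /bracketP3 !(ps3D, ps3M, ps3N).
by have [-> -> ->] := ps3_Y; case: (ps3_dY P) (ps3_dY Q) => [-> -> ->] [-> -> ->].
Qed.
Lemma ps2_bracket F G : ps2 (bracketP2 F G) = bracketB (ps2 F) (ps2 G).
Proof.
rewrite /bracketP2 !(ps2D, ps2M, ps2N).
by case: (ps2_dX F) (ps2_dX G) => [-> ->] [-> ->].
Qed.

Definition agree3 n (f g : PS3 k) :=
  forall i j l, (i <= n)%N -> (j <= n)%N -> (l <= n)%N -> f i j l = g i j l.
Definition agree2 n (f g : PS2 k) := forall a b, (a <= n)%N -> f a b = g a b.

Lemma agree3D n f g f' g' : agree3 n f f' -> agree3 n g g' -> agree3 n (add3 f g) (add3 f' g').
Proof. by move=> ff gg i j l hi hj hl; rewrite /add3 ff ?gg. Qed.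
Lemma agree3N n f f' : agree3 n f f' -> agree3 n (opp3 f) (opp3 f').
Proof. by move=> ff i j l hi hj hl; rewrite /opp3 ff. Qed.
Lemma agree3M n f g f' g' : agree3 n f f' -> agree3 n g g' -> agree3 n (mul3 f g) (mul3 f' g').
Proof.
move=> ff gg i j l hi hj hl; apply: eq_bigr => i' _; apply: eq_bigr => j' _.
apply: eq_bigr => l' _; have := ltn_ord i'; have := ltn_ord j'; have := ltn_ord l'.
by rewrite !ltnS => hl' hj' hi'; rewrite ff ?gg //; lia.
Qed.
Lemma agree3_d n f f' : agree3 n.+1 f f' ->
  [/\ agree3 n (d3_0 f) (d3_0 f'), agree3 n (d3_1 f) (d3_1 f') & agree3 n (d3_2 f) (d3_2 f')].
Proof. by move=> ff; split=> i j l hi hj hl; rewrite /d3_0 /d3_1 /d3_2 ff //; lia. Qed.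
Lemma agree3_bracket n f g f' g' : agree3 n.+1 f f' -> agree3 n.+1 g g' ->
  agree3 n (bracketA f g) (bracketA f' g').
Proof.
move=> /agree3_d[ff0 ff1 ff2] /agree3_d[gg0 gg1 gg2].
by rewrite /bracketA /jac3; do ! first [apply: agree3D | apply: agree3M | apply: agree3N
  | assumption | done].
Qed.

Lemma agree2W n f g : agree2 n.+1 f g -> agree2 n f g.
Proof. by move=> fg a b ha; apply: fg; apply: leqW. Qed.
Lemma agree2D n f g f' g' : agree2 n f f' -> agree2 n g g' -> agree2 n (add2 f g) (add2 f' g').
Proof. by move=> ff gg a b ha; rewrite /add2 ff ?gg. Qed.
Lemma agree2N n f f' : agree2 n f f' -> agree2 n (opp2 f) (opp2 f').
Proof. by move=> ff a b ha; rewrite /opp2 ff. Qed.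
Lemma agree2M n f g f' g' : agree2 n f f' -> agree2 n g g' -> agree2 n (mul2 f g) (mul2 f' g').
Proof.
move=> ff gg a b ha; apply: eq_bigr => i _; apply: eq_bigr => j _.
by have := ltn_ord i; rewrite ltnS => hi; rewrite ff ?gg //; lia.
Qed.
Lemma agree2_bracket n f g f' g' : agree2 n.+1 f f' -> agree2 n.+1 g g' ->
  agree2 n (bracketB f g) (bracketB f' g').
Proof.
have d0 m h h' : agree2 m.+1 h h' -> agree2 m (d2_0 h) (d2_0 h').
  by move=> hh a b ha; rewrite /d2_0 hh.
have d1 m h h' : agree2 m.+1 h h' -> agree2 m (d2_1 h) (d2_1 h').
  by move=> /agree2W hh a b ha; rewrite /d2_1 hh.
move=> ff gg; rewrite /bracketB.
by apply/agree2N/agree2D/agree2N; apply: agree2M; [apply: d0 | apply: d1 | apply: d1 | apply: d0].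
Qed.

Definition trunc3 N (f : PS3 k) : P3 :=
  \poly_(i < N) \poly_(j < N) \poly_(l < N) f i j l.

(* By [Phi_coef_local], the x0^a-part of the image of a series only involves its
   coefficients of degree at most a in each variable. *)
Definition phi (f : PS3 k) : PS2 k := fun a b => (Phi (trunc3 a.+1 f))`_a`_b.

Lemma trunc3_agree n N f : (n < N)%N -> agree3 n (ps3 (trunc3 N f)) f.
Proof.
move=> hN i j l hi hj hl; rewrite /ps3 /trunc3 coef_poly (leq_ltn_trans hi hN).
by rewrite coef_poly (leq_ltn_trans hj hN) coef_poly (leq_ltn_trans hl hN).
Qed.

Lemma phi_agree n P f : agree3 n (ps3 P) f -> agree2 n (ps2 (Phi P)) (phi f).
Proof.
move=> Pf a b ha; rewrite /phi /ps2 (@Phi_coef_local _ a P (trunc3 a.+1 f)) //.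
move=> i j l hi hj hl; have := trunc3_agree f (ltnSn a) hi hj hl; rewrite /ps3 => ->.
by apply: Pf; apply: leq_trans ha.
Qed.

Lemma phi_ps3 P : phi (ps3 P) = ps2 (Phi P).
Proof. by apply: ps2_ext => a b; rewrite -(@phi_agree a P (ps3 P)). Qed.

Lemma phi_at a b P f : agree3 a (ps3 P) f -> phi f a b = ps2 (Phi P) a b.
Proof. by move=> Pf; rewrite (phi_agree Pf). Qed.

Lemma phi_add f g : phi (add3 f g) = add2 (phi f) (phi g).
Proof.
apply: ps2_ext => a b; set P := trunc3 a.+1 f; set Q := trunc3 a.+1 g.
have [Pf Qg] : agree3 a (ps3 P) f /\ agree3 a (ps3 Q) g by split; apply: trunc3_agree.
rewrite (@phi_at a b (P + Q)); last by rewrite ps3D; apply: agree3D.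
rewrite rmorphD ps2D; exact: agree2D (phi_agree Pf) (phi_agree Qg) _ _ (leqnn a).
Qed.

Lemma phi_mul f g : phi (mul3 f g) = mul2 (phi f) (phi g).
Proof.
apply: ps2_ext => a b; set P := trunc3 a.+1 f; set Q := trunc3 a.+1 g.
have [Pf Qg] : agree3 a (ps3 P) f /\ agree3 a (ps3 Q) g by split; apply: trunc3_agree.
rewrite (@phi_at a b (P * Q)); last by rewrite ps3M; apply: agree3M.
rewrite rmorphM ps2M; exact: agree2M (phi_agree Pf) (phi_agree Qg) _ _ (leqnn a).
Qed.

Lemma phi_bracket f g : phi (bracketA f g) = bracketB (phi f) (phi g).
Proof.
apply: ps2_ext => a b; set P := trunc3 a.+2 f; set Q := trunc3 a.+2 g.
have [Pf Qg] : agree3 a.+1 (ps3 P) f /\ agree3 a.+1 (ps3 Q) g by split; apply: trunc3_agree.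
rewrite (@phi_at a b (bracketP3 P Q)); last by rewrite ps3_bracket; apply: agree3_bracket.
rewrite Phi_bracket ps2_bracket.
exact: agree2_bracket (phi_agree Pf) (phi_agree Qg) _ _ (leqnn a).
Qed.

Lemma phi_iota h : phi (iotaA h) = iotaB h.
Proof.
apply: ps2_ext => a b; set p := \poly_(i < a.+1) h i.
rewrite (@phi_at a b (map_poly (polyCC k) p)).
  by rewrite Phi_polyCC ps2_polyC /iotaB coef_poly ltnSn.
move=> i j l hi _ _; rewrite ps3_polyCC /iotaA coef_poly.
by rewrite (leq_ltn_trans hi (ltnSn a)).
Qed.

Lemma phi_good : good_phi phi.
Proof.
have [y0E y1E y2E] := ps3_Y.
have phi_y0 : phi (y0 k) = ps2 X0 by rewrite -y0E phi_ps3 Phi_Y0.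
have phi_y1 : phi (y1 k) = ps2 imY1 by rewrite -y1E phi_ps3 Phi_Y1.
have phi_y2 : phi (y2 k) = ps2 imY2 by rewrite -y2E phi_ps3 Phi_Y2.
split; first split.
- exact: phi_add.
- exact: phi_mul.
- by rewrite -ps3_1 phi_ps3 rmorph1 ps2_1.
- exact: phi_iota.
- rewrite /relA -y0E -y1E -y2E -!ps3M -ps3N -ps3D phi_ps3.
  rewrite rmorphD rmorphN !rmorphM Phi_Y0 Phi_Y1 Phi_Y2 imY1E imY2E.
  have -> : (- (X0 * X1)) * (- (X0 * X1)) + - (X0 * (X0 * (X1 * X1))) = 0 by ring.
  by apply: ps2_ext => a b; rewrite /ps2 !coef0.
- split=> a b hb.
  + by rewrite phi_y0 ps2_X0 (negbTE hb) andbF.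
  + by rewrite phi_y1 ps2_imY1 (negbTE hb) andbF oppr0.
  + by rewrite phi_y2 ps2_imY2 (negbTE hb) andbF.
- exact: phi_bracket.
Qed.

Lemma sum_ord_delta n p (F : nat -> k) :
  \sum_(i < n) (i == p :> nat)%:R * F i = if (p < n)%N then F p else 0.
Proof.
rewrite -(@big_ord1_eq _ 0 +%R F p n) [RHS]big_mkcond; apply: eq_bigr => i _.
by case: eqP; rewrite ?mul1r ?mul0r.
Qed.

Lemma mul3_mono p q r g a b c : mul3 (mono3 k p q r) g a b c =
  if [&& p <= a, q <= b & r <= c]%N then g (a - p)%N (b - q)%N (c - r)%N else 0.
Proof.
have monoE i j l : mono3 k p q r i j l = (i == p)%:R * ((j == q)%:R * (l == r)%:R).
  by rewrite /mono3; do 3 case: eqP => _ /=; rewrite ?mulr1 ?mulr0 ?mul0r.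
rewrite /mul3.
under eq_bigr => i _ do under eq_bigr => j _ do under eq_bigr => l _ do
  rewrite monoE -!mulrA.
under eq_bigr => i _ do under eq_bigr => j _ do
  rewrite -!mulr_sumr (sum_ord_delta _ _ (fun l => g (a - i) (b - j) (c - l))%N).
under eq_bigr => i _ do rewrite -mulr_sumr (sum_ord_delta _ _
  (fun j => if (r < c.+1)%N then g (a - i)%N (b - j)%N (c - r)%N else 0)).
rewrite (sum_ord_delta _ _ (fun i => if (q < b.+1)%N then
  if (r < c.+1)%N then g (a - i)%N (b - q)%N (c - r)%N else 0 else 0)).
by rewrite !ltnS; case: (p <= a)%N; case: (q <= b)%N; case: (r <= c)%N => /=.
Qed.

Lemma mul2_one g : mul2 (one2 k) g = g.
Proof.
have oneE i j : one2 k i j = (i == 0%N)%:R * (j == 0%N)%:R.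
  by rewrite /one2 /mono2; do 2 case: eqP => _ /=; rewrite ?mulr1 ?mulr0.
apply: ps2_ext => a b; rewrite /mul2.
under eq_bigr => i _ do under eq_bigr => j _ do rewrite oneE -mulrA.
under eq_bigr => i _ do rewrite -mulr_sumr (sum_ord_delta _ _ (fun j => g (a - i)%N (b - j)%N)).
by rewrite (sum_ord_delta _ _ (fun i => g (a - i)%N (b - 0)%N)) !subn0.
Qed.

Lemma mul2_vanish a b F g : vanish_below a.+1 F -> mul2 (ps2 F) g a b = 0.
Proof.
move=> hF; rewrite /mul2 big1 // => i _; rewrite big1 // => j _.
by rewrite /ps2 hF ?coef0 ?mul0r.
Qed.

Lemma bracketB_X0 u a b : bracketB (ps2 X0) u a b = - ((b.+1)%:R * u a b.+1).
Proof.
rewrite /bracketB; case: (ps2_dX X0) => <- <-.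
case: (dX_X k) => -> _ -> _; rewrite ps2_1 mul2_one /opp2 /add2 mul2_vanish ?oppr0 ?addr0 //.
by move=> m _; rewrite coef0.
Qed.

Lemma decompose_high a (R : PS3 k) : agree3 a R (zero3 k) ->
  R = add3 (mul3 (ps3 (Y0 ^+ a.+1)) (fun i j l => R (i + a.+1)%N j l))
     (add3 (mul3 (ps3 (Y1 ^+ a.+1))
                 (fun i j l => if (i <= a)%N then R i (j + a.+1)%N l else 0))
           (mul3 (ps3 (Y2 ^+ a.+1))
                 (fun i j l => if (i <= a)%N && (j <= a)%N then R i j (l + a.+1)%N else 0))).
Proof.
move=> hR; case: (ps3_Yn a.+1) => -> -> ->.
apply: ps3_ext => i j l; rewrite /add3 !mul3_mono !leq0n !subn0 /=.
have [hi | hi] := leqP i a; have [hj | hj] := leqP j a; have [hl | hl] := leqP l a;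
  by rewrite /= ?subnK ?addr0 ?add0r // hR.
Qed.

Section Uniqueness.
Hypothesis char0 : [pchar k] =i pred0.
Variable psi : PS3 k -> PS2 k.
Hypothesis psi_good : good_phi psi.

Let psiD f g : psi (add3 f g) = add2 (psi f) (psi g). Proof. by case: psi_good => [[]]. Qed.
Let psiM f g : psi (mul3 f g) = mul2 (psi f) (psi g). Proof. by case: psi_good => [[]]. Qed.
Let psi_iota h : psi (iotaA h) = iotaB h. Proof. by case: psi_good => [[]]. Qed.
Let psi_bracket f g : psi (bracketA f g) = bracketB (psi f) (psi g).
Proof. by case: psi_good. Qed.
Let psi_homog : homogB 1 (psi (ps3 Y1)) /\ homogB 2 (psi (ps3 Y2)).
Proof. by have [_ -> ->] := ps3_Y; case: psi_good => _ []. Qed.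

Lemma psi_polyCC p : psi (ps3 (map_poly (polyCC k) p)) = ps2 (Phi (map_poly (polyCC k) p)).
Proof. by rewrite ps3_polyCC psi_iota Phi_polyCC ps2_polyC. Qed.

Lemma psi_Y0 : psi (ps3 Y0) = ps2 X0.
Proof.
have -> : Y0 = map_poly (polyCC k) 'X by rewrite map_polyX.
by rewrite psi_polyCC map_polyX -Phi_Y0.
Qed.

Lemma psi_Y1 : psi (ps3 Y1) = ps2 imY1.
Proof.
have := psi_bracket (ps3 Y0) (ps3 Y1); rewrite -ps3_bracket (proj1 (bracketP3_Y0 k)) psi_Y0.
move=> e; apply: ps2_ext => a b; rewrite ps2_imY1.
have [-> | hb] := eqVneq b 1%N; last first.
  by rewrite (proj1 psi_homog) // andbF oppr0.
have := congr1 (fun F => F a 0%N) e; rewrite /= bracketB_X0 ps2_X0 mul1r => ->.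
by rewrite opprK.
Qed.

Lemma psi_Y2 : psi (ps3 Y2) = ps2 imY2.
Proof.
have := psi_bracket (ps3 Y0) (ps3 Y2).
rewrite -ps3_bracket (proj2 (bracketP3_Y0 k)) ps3D psiD psi_Y1 psi_Y0.
move=> e; apply: ps2_ext => a b; rewrite ps2_imY2.
have [-> | hb] := eqVneq b 2%N; last first.
  by rewrite (proj2 psi_homog) // andbF.
have two_neq0 : (2%:R : k) != 0 by move/pcharf0P: char0 => ->.
apply: (mulfI two_neq0); have := congr1 (fun F => F a 1%N) e.
rewrite /= bracketB_X0 /add2 ps2_imY1 andbT => e2.
by rewrite -[LHS]opprK -e2; ring.
Qed.

Lemma psi_ps3 P : psi (ps3 P) = ps2 (Phi P).
Proof.
elim/poly3_ind: P => [c|P Q eP eQ|P Q eP eQ|||].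
- by have := psi_polyCC c%:P; rewrite !map_polyC.
- by rewrite ps3D psiD eP eQ rmorphD ps2D.
- by rewrite ps3M psiM eP eQ rmorphM ps2M.
- by rewrite psi_Y0 Phi_Y0.
- by rewrite psi_Y1 Phi_Y1.
- by rewrite psi_Y2 Phi_Y2.
Qed.

Lemma psi_eq_phi : psi = phi.
Proof.
apply: functional_extensionality => f; apply: ps2_ext => a b.
set T := ps3 (trunc3 a.+1 f).
set R := fun i j l => f i j l - T i j l.
have fE : f = add3 T R by apply: ps3_ext => i j l; rewrite /add3 /R addrC subrK.
have hR : agree3 a R (zero3 k).
  by move=> i j l hi hj hl; rewrite /R /T (trunc3_agree f (ltnSn a) hi hj hl) subrr.
have psiR : psi R a b = 0.
  rewrite (decompose_high hR) !psiD /add2 !psiM !psi_ps3.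
  case: (vanish_below_Phi_Yn k a.+1) => v0 v1 v2.
  transitivity (0 + (0 + 0) : k); last by rewrite !addr0.
  by congr (_ + (_ + _)); apply: mul2_vanish.
rewrite {1}fE psiD /add2 psiR addr0 psi_ps3.
by rewrite /phi /ps2.
Qed.

End Uniqueness.

End Series.

Theorem theorem3 (k : fieldType) (hchar : [pchar k] =i pred0) :
  exists phi : PS3 k -> PS2 k,
    [/\ good_phi phi,
        phi (y0 k) = x0 k,
        phi (y1 k) = opp2 (mul2 (x0 k) (x1 k)),
        phi (y2 k) = mul2 (x0 k) (mul2 (x1 k) (x1 k))
      & forall psi : PS3 k -> PS2 k, good_phi psi -> psi = phi].
Proof.
have [<- <- <-] := ps3_Y k; have [<- <-] := ps2_imY k; have [<- _] := ps2_X k.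
exists (phi (k := k)); split.
- exact: phi_good.
- by rewrite phi_ps3 Phi_Y0.
- by rewrite phi_ps3 Phi_Y1.
- by rewrite phi_ps3 Phi_Y2.
- by move=> psi psi_good; apply: (psi_eq_phi hchar psi_good).
Qed.
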